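(* Let $n\ge 2$, $p\in[0,1]$ and let $\Phi$ be the $\mathfrak{su}_n$ channel. Then $$S_{\min}:=\min_{\rho}S(\Phi(\rho))=-\frac{np}{n+1}\ln\Big(\frac{np}{n^2-1}\Big)-\Big(1-\frac{np}{n+1}\Big)\ln\Big(1-\frac{np}{n+1}\Big),$$ where the minimum is over all $n\times n$ density matrices and $S(\sigma)=-\operatorname{Tr}(\sigma\ln\sigma)$ is the von Neumann entropy (with $0\ln 0=0$). Moreover, for fixed $p\in[0,1]$, $\lim_{n\to\infty}S_{\min}/\ln n=p$.
   Context: The $\mathfrak{su}_n$ channel is $\Phi(\rho)=(1-p)\rho+\frac{pn}{2(n^2-1)}\sum_{i=1}^{n^2-1}X_i\rho X_i$, where $X_1,\dots,X_{n^2-1}$ are traceless Hermitian $n\times n$ matrices forming a basis of $i\,\mathfrak{su}_n$ with $\operatorname{Tr}(X_iX_j)=2\delta_{ij}$ (generalized Gell-Mann matrices). A density matrix is a positive semidefinite matrix of trace 1. *)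

From HB Require Import structures.
From mathcomp Require Import all_boot all_order all_algebra.
From mathcomp Require Import all_classical all_reals all_analysis.
From mathcomp.real_closed Require Import complex.

Set Implicit Arguments.
Unset Strict Implicit.
Unset Printing Implicit Defensive.

Import Order.TTheory GRing.Theory Num.Theory.
Local Open Scope ring_scope.

Section QDefs.
Variable R : realType.
Local Notation C := (R[i]).

Definition adjmx (n : nat) (A : 'M[C]_n) : 'M[C]_n := (map_mx (@conjc R) A)^T.

Definition hermitian (n : nat) (A : 'M[C]_n) : Prop := adjmx A = A.

Definition psd (n : nat) (A : 'M[C]_n) : Prop :=
  hermitian A /\ forall v : 'cV[C]_n, 0 <= ((map_mx (@conjc R) v)^T *m A *m v) 0 0.

Definition density (n : nat) (A : 'M[C]_n) : Prop := psd A /\ \tr A = 1.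

(* X_1, ..., X_{n^2-1}: traceless Hermitian with Tr(X_i X_j) = 2 delta_ij
   (hence a basis of i su_n, e.g. the generalized Gell-Mann matrices) *)
Definition gell_mann_basis (n : nat) (X : 'I_(n ^ 2 - 1) -> 'M[C]_n) : Prop :=
  (forall i, hermitian (X i)) /\ (forall i, \tr (X i) = 0) /\
  (forall i j, \tr (X i *m X j) = (2 * (i == j)%:R)).

Definition su_channel (n : nat) (X : 'I_(n ^ 2 - 1) -> 'M[C]_n) (p : R)
  (rho : 'M[C]_n) : 'M[C]_n :=
  ((1 - p)%:C)%C *: rho +
  ((p * n%:R / (2 * (n ^ 2 - 1)%:R))%:C)%C *: \sum_i (X i *m rho *m X i).

(* eigenvalues (with multiplicity) = roots of the characteristic polynomial *)
Definition eigvals (n : nat) (A : 'M[C]_n) : seq C :=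
  sval (closed_field_poly_normal (char_poly A)).

Definition xlnx (x : R) : R := if x == 0 then 0 else x * ln x.

(* von Neumann entropy S(s) = - Tr (s ln s) = - sum_lambda lambda ln lambda *)
Definition vN_entropy (n : nat) (A : 'M[C]_n) : R :=
  - \sum_(l <- eigvals A) xlnx (complex.Re l).

Definition is_min_output_entropy (n : nat) (X : 'I_(n ^ 2 - 1) -> 'M[C]_n)
  (p s : R) : Prop :=
  (exists rho : 'M[C]_n, density rho /\ vN_entropy (su_channel X p rho) = s) /\
  (forall rho : 'M[C]_n, density rho -> s <= vN_entropy (su_channel X p rho)).

Definition Smin_formula (n : nat) (p : R) : R :=
  - (n%:R * p / (n%:R + 1)) * ln (n%:R * p / (n%:R ^+ 2 - 1))
  - (1 - n%:R * p / (n%:R + 1)) * ln (1 - n%:R * p / (n%:R + 1)).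

End QDefs.

From HB Require Import structures.
From mathcomp Require Import all_boot all_order all_algebra.
From mathcomp Require Import all_classical all_reals all_analysis.
From mathcomp.real_closed Require Import complex.
From mathcomp Require Import ring lra.
Import Order.TTheory GRing.Theory Num.Theory.
Import numFieldNormedType.Exports.
Local Open Scope classical_set_scope.
Local Open Scope ring_scope.

(* Since {1, X_1, ..., X_(n^2-1)} is an orthogonal basis of the n x n matrices (Tr 1 = n,
   Tr (X_i X_j) = 2 delta_ij), expanding the matrix units in it yields the completeness relation
   sum_i X_i A X_i = 2 Tr(A) 1 - (2/n) A.  Hence on density matrices the channel is affine,
   Phi(rho) = a rho + b 1 with b = np/(n^2-1) and a + b = 1 - np/(n+1), and the spectrum of
   Phi(rho) is a lambda_k + b for the spectrum lambda of rho, a probability vector.  As x ln x is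
   convex, sum_k f(a lambda_k + b) is maximal at a vertex of the simplex: pure states minimise the
   output entropy and give the closed formula.  With q = np/(n+1) -> p that formula is
   q ln n + O(1) uniformly in n, whence S_min / ln n -> p. *)

Lemma sum_mul_indicator (R : pzSemiRingType) (I : finType) (F : I -> R) j :
  \sum_i F i * (i == j)%:R = F j.
Proof.
rewrite (bigD1 j) //= eqxx mulr1 big1 ?addr0 // => i /negbTE ->.
by rewrite mulr0.
Qed.

Section Spectrum.
Context {R : realType}.
Local Notation C := (R[i]).

Lemma char_poly_eigvals {n} (A : 'M[C]_n) :
  char_poly A = \prod_(z <- eigvals A) ('X - z%:P).
Proof.
rewrite /eigvals; case: closed_field_poly_normal => r /= {1}->.
by rewrite (monicP (char_poly_monic A)) scale1r.
Qed.

Lemma size_eigvals {n} (A : 'M[C]_n) : size (eigvals A) = n.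
Proof. by have := size_char_poly A; rewrite char_poly_eigvals size_prod_XsubC; case. Qed.

Lemma sum_eigvals {n} (A : 'M[C]_n) : \sum_(z <- eigvals A) z = \tr A.
Proof.
case: n A => [|n] A.
  by rewrite (size0nil (size_eigvals A)) big_nil /mxtrace big_ord0.
have /eqP := @char_poly_trace _ n.+1 A isT.
have -> : n.+1.-1 = (size (eigvals A)).-1 by rewrite size_eigvals.
by rewrite char_poly_eigvals coefPn_prod_XsubC ?size_eigvals // eqr_opp => /eqP.
Qed.

Lemma perm_eigvals_trig {n} (A : 'M[C]_n) : is_trig_mx A ->
  perm_eq (eigvals A) [seq A i i | i <- enum 'I_n].
Proof.
move=> /char_poly_trig trigA; apply: prod_XsubC_eq.
by rewrite -char_poly_eigvals trigA big_map enumT.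
Qed.

Lemma char_poly_affine {n} (A : 'M[C]_n) (a b : C) :
  char_poly (a *: A + b%:M) = \prod_(z <- eigvals A) ('X - (a * z + b)%:P).
Proof.
have [->|a_neq0] := eqVneq a 0.
  rewrite scale0r add0r char_poly_trig ?scalar_mx_is_trig //.
  transitivity (\prod_(i < n) ('X - b%:P)).
    by apply: eq_bigr => i _; rewrite /scalar_mx mxE eqxx mulr1n.
  under [RHS]eq_bigr do rewrite mul0r add0r.
  by rewrite prodr_const card_ord big_const_seq count_predT size_eigvals iter_mulr mulr1.
pose q : {poly C} := a^-1 *: ('X - b%:P).
have aq : a%:P * q = 'X - b%:P by rewrite mul_polyC scalerA mulfV // scale1r.
have charA_q : char_poly A \Po q = \det (q%:M - map_mx polyC A).
  rewrite /char_poly -det_map_mx; congr (\det _); apply/matrixP => i j.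
  rewrite /scalar_mx !mxE rmorphB /= rmorphMn /= comp_polyX comp_polyC.
  by case: (i == j).
have -> : char_poly (a *: A + b%:M) = (\prod_(z <- eigvals A) a%:P) * (char_poly A \Po q).
  rewrite big_const_seq count_predT size_eigvals iter_mulr mulr1 charA_q -detZ.
  congr (\det _); apply/matrixP => i j; rewrite /scalar_mx !mxE.
  by case: (i == j); rewrite /= ?mulr1n ?mulr0n ?addr0 mulrBr ?aq ?polyCD polyCM; ring.
rewrite char_poly_eigvals rmorph_prod -big_split /=; apply: eq_bigr => z _.
by rewrite rmorphB /= comp_polyX comp_polyC mulrBr aq polyCD polyCM; ring.
Qed.

Lemma perm_eigvals_affine {n} (A : 'M[C]_n) (a b : C) :
  perm_eq (eigvals (a *: A + b%:M)) [seq a * z + b | z <- eigvals A].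
Proof. by apply: prod_XsubC_eq; rewrite -char_poly_eigvals char_poly_affine big_map. Qed.

Lemma eigvals_psd_ge0 {n} (A : 'M[C]_n) : psd A -> {in eigvals A, forall z, 0 <= z}.
Proof.
move=> [_ psdA] z z_eig.
have /eigenvalueP [u uA u_neq0] : eigenvalue A z.
  by rewrite eigenvalue_root_char char_poly_eigvals root_prod_XsubC.
pose v : 'cV[C]_n := (map_mx (@conjc R) u)^T.
have vJ : (map_mx (@conjc R) v)^T = u.
  by apply/matrixP => i j; rewrite !mxE conjcK (ord1 i).
have uv_gt0 : 0 < (u *m v) 0 0.
  have uv_ge0 k : 0 <= u 0 k * v k 0 by rewrite /v !mxE mulcJ_ge0.
  rewrite mxE lt_def (sumr_ge0 _ (fun k _ => uv_ge0 k)) andbT.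
  apply: contra u_neq0 => /eqP /psumr_eq0P uv0; apply/eqP/matrixP => i j.
  have /eqP := uv0 (fun k _ => uv_ge0 k) j isT; rewrite (ord1 i) /v !mxE.
  by rewrite mulf_eq0 conjc_eq0 orbb => /eqP.
by have := psdA v; rewrite vJ uA -scalemxAl mxE pmulr_lge0.
Qed.

Lemma tr_mul_delta {n} (A : 'M[C]_n) i j : \tr (A *m delta_mx i j) = A j i.
Proof.
rewrite /mxtrace (bigD1 j) //= big1 ?addr0 => [|k kj]; rewrite mxE.
  rewrite (bigD1 i) //= big1 ?addr0 => [|l li]; rewrite mxE ?eqxx ?mulr1 //.
  by rewrite (negbTE li) mulr0.
by rewrite big1 // => l _; rewrite mxE (negbTE kj) andbF mulr0.
Qed.

End Spectrum.

Section GellMannCompleteness.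
Context {R : realType}.
Local Notation C := (R[i]).
Variables (n : nat) (X : 'I_(n ^ 2 - 1) -> 'M[C]_n).
Hypotheses (n_gt0 : (0 < n)%N) (gmX : gell_mann_basis X).

Let trX i : \tr (X i) = 0. Proof. by case: gmX => _ []. Qed.
Let trXX i j : \tr (X i *m X j) = 2 * (i == j)%:R. Proof. by case: gmX => _ []. Qed.
Let nC_neq0 : (n%:R : C) != 0. Proof. by rewrite pnatr_eq0 -lt0n. Qed.

Definition gm_basis : seq 'M[C]_n := 1%:M :: map X (enum 'I_(n ^ 2 - 1)).

Definition gm_expand (M : 'M[C]_n) : 'M[C]_n :=
  (\tr M / n%:R) *: 1%:M + 2^-1 *: \sum_i \tr (X i *m M) *: X i.

Lemma gm_expand0 : gm_expand 0 = 0.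
Proof.
rewrite /gm_expand mxtrace0 mul0r scale0r add0r big1 ?scaler0 // => i _.
by rewrite mulmx0 mxtrace0 scale0r.
Qed.

Lemma gm_expandD A B : gm_expand (A + B) = gm_expand A + gm_expand B.
Proof.
rewrite /gm_expand mxtraceD mulrDl scalerDl addrACA -scalerDr -big_split /=.
by congr (_ + _); congr (_ *: _); apply: eq_bigr => i _; rewrite mulmxDr mxtraceD scalerDl.
Qed.

Lemma gm_expandZ k A : gm_expand (k *: A) = k *: gm_expand A.
Proof.
rewrite /gm_expand mxtraceZ scalerDr !scalerA mulrA; congr (_ + _).
rewrite [k * _]mulrC -scalerA scaler_sumr; congr (_ *: _).
by apply: eq_bigr => i _; rewrite -scalemxAr mxtraceZ scalerA.
Qed.

Lemma gm_expand_basis M : M \in gm_basis -> gm_expand M = M.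
Proof.
rewrite inE => /predU1P [-> | /mapP [j _ ->]].
  rewrite /gm_expand mxtrace1 divff // scale1r big1 ?scaler0 ?addr0 // => i _.
  by rewrite mulmx1 trX scale0r.
rewrite /gm_expand trX mul0r scale0r add0r (bigD1 j) //= big1 ?addr0 => [|i ij].
  by rewrite trXX eqxx mulr1 scalerA mulVf ?scale1r ?pnatr_eq0.
by rewrite trXX (negbTE ij) mulr0 scale0r.
Qed.

Lemma nth_gm_basis {k} (kn : (k < n ^ 2 - 1)%N) : gm_basis`_k.+1 = X (Ordinal kn).
Proof.
rewrite /= (nth_map (Ordinal kn)) ?size_enum_ord //.
by congr X; apply: val_inj; rewrite /= nth_enum_ord.
Qed.

Lemma size_gm_basis : size gm_basis = (n ^ 2 - 1).+1.
Proof. by rewrite /= size_map size_enum_ord. Qed.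

Lemma trace_gm_basis i j : (i < size gm_basis)%N -> (j < size gm_basis)%N ->
  \tr (gm_basis`_i *m gm_basis`_j) = if i == j then (if i is 0 then n%:R else 2) else 0.
Proof.
rewrite size_gm_basis !ltnS.
case: i => [|i]; case: j => [|j] // lti ltj.
- by rewrite /= mulmx1 mxtrace1.
- by rewrite (nth_gm_basis ltj) /= mul1mx trX.
- by rewrite (nth_gm_basis lti) /= mulmx1 trX.
rewrite (nth_gm_basis lti) (nth_gm_basis ltj) trXX.
by rewrite eqSS -[Ordinal lti == _]/(i == j); case: (i == j); rewrite ?mulr1 ?mulr0.
Qed.

Lemma free_gm_basis : free gm_basis.
Proof.
apply/(@vector.freeP _ _ _ (in_tuple gm_basis)) => k sum_k0 j.
have := congr1 (fun M => \tr (gm_basis`_j *m M)) sum_k0.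
rewrite /= mulmx0 mxtrace0 mulmx_sumr raddf_sum (bigD1 j) //= big1 => [|i ij].
  rewrite -scalemxAr mxtraceZ addr0 trace_gm_basis ?eqxx // => /eqP.
  have norm_neq0 : (if nat_of_ord j is 0 then n%:R else 2 : C) != 0.
    by case: (nat_of_ord j) => [|_] //; rewrite pnatr_eq0.
  by rewrite mulf_eq0 (negbTE norm_neq0) orbF => /eqP.
by rewrite -scalemxAr mxtraceZ trace_gm_basis // ifN ?mulr0 // eq_sym.
Qed.

Lemma span_gm_basis : (<<gm_basis>> = fullv)%VS.
Proof.
apply/eqP; rewrite eqEdim subvf dimvf dim_matrix (eqP free_gm_basis) size_gm_basis.
by rewrite /= subn1 prednK ?expn_gt0 ?n_gt0 // -[(n * n)%R]/(n * n)%N mulnn.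
Qed.

Lemma gm_expandE M : gm_expand M = M.
Proof.
have M_span : M \in <<gm_basis>>%VS by rewrite span_gm_basis memvf.
have [k -> _] := vector.free_span free_gm_basis M_span.
rewrite (big_morph _ gm_expandD gm_expand0); apply: eq_big_seq => A A_basis.
by rewrite gm_expandZ gm_expand_basis.
Qed.

Lemma sum_gm_entries a b c d : \sum_i X i a b * X i c d =
  2 * ((a == d)%:R * (b == c)%:R) - 2 / n%:R * ((a == b)%:R * (c == d)%:R).
Proof.
have := congr1 (fun M : 'M[C]_n => M a b) (gm_expandE (delta_mx d c)).
rewrite /gm_expand -{1}[delta_mx d c]mul1mx tr_mul_delta /scalar_mx !mxE summxE.
under eq_bigr do rewrite mxE tr_mul_delta mulrC.
move=> expand_ab.
have -> : \sum_i X i a b * X i c d =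
    2 * (((a == d) && (b == c))%:R - (c == d)%:R / n%:R * (a == b)%:R).
  by rewrite -expand_ab; field.
by rewrite -mulnb natrM; field.
Qed.

Lemma sum_gm_sandwich (A : 'M[C]_n) :
  \sum_i (X i *m A *m X i) = (2 * \tr A)%:M - (2 / n%:R) *: A.
Proof.
apply/matrixP => a e; rewrite summxE /scalar_mx !mxE.
transitivity (\sum_b \sum_c A b c * \sum_i X i a b * X i c e).
  under eq_bigr do rewrite mxE; under eq_bigr do under eq_bigr do rewrite mxE big_distrl.
  rewrite exchange_big; under eq_bigr do rewrite exchange_big.
  rewrite exchange_big; apply: eq_bigr => b _; apply: eq_bigr => c _.
  by rewrite mulr_sumr; apply: eq_bigr => i _ /=; ring.
under eq_bigr do under eq_bigr do rewrite sum_gm_entries mulrBr.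
under eq_bigr do rewrite sumrB; rewrite sumrB; congr (_ - _).
  transitivity (\sum_b \sum_c (2 * (a == e)%:R * A b c) * (c == b)%:R).
    by apply: eq_bigr => b _; apply: eq_bigr => c _; rewrite [c == b]eq_sym; ring.
  under eq_bigr do rewrite sum_mul_indicator.
  by rewrite -mulr_sumr; case: (a == e); rewrite ?mulr1 ?mulr0 ?mul0r ?mulr1n ?mulr0n.
transitivity (\sum_b (2 / n%:R * A b e) * (b == a)%:R); last exact: sum_mul_indicator.
apply: eq_bigr => b _.
transitivity (\sum_c (2 / n%:R * (b == a)%:R * A b c) * (c == e)%:R).
  by apply: eq_bigr => c _; rewrite [b == a]eq_sym; ring.
by rewrite sum_mul_indicator mulrAC.
Qed.

End GellMannCompleteness.

Section EntropyConcavity.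
Context {R : realType}.

(* Holds at 0 too since ln 0 = 0, so the convention 0 ln 0 = 0 is built in. *)
Lemma xlnxE (x : R) : xlnx x = x * ln x.
Proof. by rewrite /xlnx; case: eqP => [->|]; rewrite ?mul0r. Qed.

Lemma xlnx_ge_tangent (x m : R) : 0 <= x -> 0 < m -> x * ln m + x - m <= x * ln x.
Proof.
move=> x_ge0 m_gt0; have [->|x_neq0] := eqVneq x 0.
  by rewrite !mul0r add0r sub0r oppr_le0 ltW.
have x_gt0 : 0 < x by rewrite lt_def x_neq0.
have m_x_gt0 : 0 < m / x by rewrite divr_gt0.
have ln_le : ln (m / x) <= m / x - 1.
  by rewrite -[X in ln X](subrKC 1) le_ln1Dx // ltrBrDr addNr.
have := ler_wpM2l (ltW x_gt0) ln_le.
rewrite ln_div ?posrE // !mulrBr mulrCA mulfV ?mulr1 //; lra.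
Qed.

Lemma xlnx_convex (t x y : R) : 0 <= x -> 0 <= y -> 0 <= t <= 1 ->
  xlnx (t * x + (1 - t) * y) <= t * xlnx x + (1 - t) * xlnx y.
Proof.
move=> x_ge0 y_ge0 /andP [t_ge0 t_le1]; rewrite !xlnxE.
have t'_ge0 : 0 <= 1 - t by rewrite subr_ge0.
have tx_ge0 : 0 <= t * x by rewrite mulr_ge0.
have ty_ge0 : 0 <= (1 - t) * y by rewrite mulr_ge0.
set m := t * x + (1 - t) * y; have [m0|m_neq0] := eqVneq m 0.
  have tx0 : t * x = 0 by apply/eqP; rewrite eq_le tx_ge0 andbT; move: m0; rewrite /m; lra.
  have ty0 : (1 - t) * y = 0 by apply/eqP; rewrite eq_le ty_ge0 andbT; move: m0; rewrite /m; lra.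
  by rewrite m0 mul0r !mulrA tx0 ty0 !mul0r addr0.
have m_gt0 : 0 < m by rewrite lt_def m_neq0 addr_ge0.
have := ler_wpM2l t_ge0 (@xlnx_ge_tangent x m x_ge0 m_gt0).
have := ler_wpM2l t'_ge0 (@xlnx_ge_tangent y m y_ge0 m_gt0).
rewrite /m; nra.
Qed.

Lemma sum_xlnx_affine_le (s : seq R) (a b : R) :
  (forall x, x \in s -> 0 <= x) -> \sum_(x <- s) x = 1 -> 0 <= b -> 0 <= a + b ->
  \sum_(x <- s) xlnx (a * x + b) <= xlnx (a + b) + ((size s)%:R - 1) * xlnx b.
Proof.
move=> s_ge0 s_sum1 b_ge0 ab_ge0.
have s_le1 x : x \in s -> x <= 1.
  move=> x_in; rewrite -s_sum1 (perm_big _ (perm_to_rem x_in)) big_cons lerDl.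
  by rewrite big_seq sumr_ge0 // => y /mem_rem /s_ge0.
apply: (@le_trans _ _ (\sum_(x <- s) (x * xlnx (a + b) + (1 - x) * xlnx b))).
  rewrite !big_seq; apply: ler_sum => x x_in.
  have -> : a * x + b = x * (a + b) + (1 - x) * b by ring.
  by apply: xlnx_convex => //; rewrite s_ge0 ?s_le1.
rewrite big_split /= -!mulr_suml sumrB s_sum1 mul1r.
by rewrite big_const_seq count_predT iter_addr addr0.
Qed.

End EntropyConcavity.

Section DensitySpectrum.
Context {R : realType}.
Local Notation C := (R[i]).

Definition spectrum {n} (rho : 'M[C]_n) : seq R := [seq complex.Re z | z <- eigvals rho].

Lemma eigvals_density {n} (rho : 'M[C]_n) : density rho ->
  {in eigvals rho, forall z, z = (complex.Re z)%:C%C /\ 0 <= complex.Re z}.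
Proof.
move=> [psd_rho _] z z_eig; have := eigvals_psd_ge0 _ psd_rho z z_eig.
by case: z {z_eig} => x y; rewrite lecE /= => /andP [/eqP -> ->].
Qed.

Lemma size_spectrum {n} (rho : 'M[C]_n) : size (spectrum rho) = n.
Proof. by rewrite size_map size_eigvals. Qed.

Lemma spectrum_ge0 {n} (rho : 'M[C]_n) : density rho -> {in spectrum rho, forall x, 0 <= x}.
Proof. by move=> rho_dens x /mapP [z z_eig ->]; case: (eigvals_density _ rho_dens z z_eig). Qed.

Lemma sum_spectrum {n} (rho : 'M[C]_n) : density rho -> \sum_(x <- spectrum rho) x = 1.
Proof.
move=> [_ tr_rho]; rewrite big_map.
have Re_sum (s : seq C) : \sum_(z <- s) complex.Re z = complex.Re (\sum_(z <- s) z).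
  by elim: s => [|[x y] s IH]; rewrite ?big_nil // !big_cons IH; case: (\sum_(z <- s) z).
by rewrite Re_sum sum_eigvals tr_rho.
Qed.

Lemma density_delta_mx {n} (i : 'I_n) : density (delta_mx i i : 'M[C]_n).
Proof.
split; last by rewrite -[delta_mx i i]mul1mx tr_mul_delta mxE eqxx.
split; first by apply/matrixP => k l; rewrite !mxE conjc_nat andbC.
move=> v; rewrite -trace_mx11 mxtrace_mulC mulmxA tr_mul_delta mxE big_ord1 !mxE.
exact: mulcJ_ge0.
Qed.

Lemma perm_spectrum_delta_mx {n} (i : 'I_n) :
  perm_eq (spectrum (delta_mx i i : 'M[C]_n)) [seq (k == i)%:R | k <- enum 'I_n].
Proof.
have trig : is_trig_mx (delta_mx i i : 'M[C]_n).
  apply/is_trig_mxP => k l; rewrite mxE.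
  by case: (k =P i) => [->|]; case: (l =P i) => [->|] //; rewrite ltnn.
rewrite (permPl (perm_map _ (perm_eigvals_trig _ trig))) -map_comp.
by rewrite (eq_map (g := fun k => (k == i)%:R)) // => k; rewrite /= mxE andbb; case: (k == i).
Qed.

End DensitySpectrum.

Section SuChannel.
Context {R : realType}.
Local Notation C := (R[i]).

Definition su_shift (n : nat) (p : R) : R := n%:R * p / (n%:R ^+ 2 - 1).
Definition su_scale (n : nat) (p : R) : R := 1 - n%:R * p / (n%:R + 1) - su_shift n p.

Variables (n : nat) (p : R) (X : 'I_(n ^ 2 - 1) -> 'M[C]_n).
Hypotheses (n_ge2 : (2 <= n)%N) (p_ge0 : 0 <= p) (p_le1 : p <= 1) (gmX : gell_mann_basis X).

Local Notation nr := (n%:R : R).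
Let n_gt0 : (0 < n)%N. Proof. exact: ltnW. Qed.
Let nr_ge2 : 2 <= nr. Proof. by rewrite (ler_nat R 2 n). Qed.
Let nr2B1_gt0 : 0 < nr ^+ 2 - 1. Proof. by have := nr_ge2; rewrite expr2; nra. Qed.

Lemma su_shift_ge0 : 0 <= su_shift n p.
Proof. by rewrite /su_shift divr_ge0 ?mulr_ge0 // ltW. Qed.

Lemma su_scaleD_shift_ge0 : 0 <= su_scale n p + su_shift n p.
Proof.
rewrite subrK subr_ge0 ler_pdivrMr ?mul1r;
  have := nr_ge2; have := p_ge0; have := p_le1; nra.
Qed.

Lemma su_channel_affine (rho : 'M[C]_n) : \tr rho = 1 ->
  su_channel X p rho = (su_scale n p)%:C%C *: rho + ((su_shift n p)%:C%C)%:M.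
Proof.
move=> tr_rho; rewrite /su_channel sum_gm_sandwich // tr_rho mulr1.
set c := p * nr / _.
have cE : c = su_shift n p / 2.
  by rewrite /c /su_shift natrB ?expn_gt0 ?n_gt0 // natrX; field; rewrite gt_eqF.
have scaleE : 1 - p - c * (2 / nr) = su_scale n p.
  rewrite cE /su_scale /su_shift; field.
  by apply/and3P; split; rewrite gt_eqF //; have := nr_ge2; lra.
rewrite scalerBr scalerA scale_scalar_mx addrCA -scalerBl addrC.
congr (_ *: _ + _%:M).
  by rewrite -scaleE !(rmorphB, rmorphM, rmorph1, fmorphV, rmorph_nat).
by rewrite cE !(rmorphM, fmorphV, rmorph_nat) divfK ?pnatr_eq0.
Qed.

Lemma vN_entropy_su_channel (rho : 'M[C]_n) : density rho ->
  vN_entropy (su_channel X p rho) =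
  - \sum_(x <- spectrum rho) xlnx (su_scale n p * x + su_shift n p).
Proof.
move=> rho_dens; rewrite /vN_entropy su_channel_affine; last by case: rho_dens.
rewrite (perm_big _ (perm_eigvals_affine _ _ _)) !big_map; congr (- _).
apply: eq_big_seq => z z_eig; have [zE _] := eigvals_density _ rho_dens z z_eig.
by rewrite {1}zE -rmorphM -rmorphD.
Qed.

Lemma Smin_formula_xlnx :
  Smin_formula n p = - (xlnx (su_scale n p + su_shift n p) + (nr - 1) * xlnx (su_shift n p)).
Proof.
have nrB1_shift : (nr - 1) * su_shift n p = nr * p / (nr + 1).
  by rewrite /su_shift; field; apply/andP; split; rewrite gt_eqF //; have := nr_ge2; lra.
rewrite !xlnxE subrK mulrA nrB1_shift /Smin_formula -/(su_shift n p); ring.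
Qed.

Lemma Smin_formula_le_vN_entropy (rho : 'M[C]_n) : density rho ->
  Smin_formula n p <= vN_entropy (su_channel X p rho).
Proof.
move=> rho_dens; rewrite Smin_formula_xlnx vN_entropy_su_channel // lerN2.
have := sum_xlnx_affine_le (spectrum rho) (su_scale n p) (su_shift n p) (spectrum_ge0 rho rho_dens)
  (sum_spectrum rho rho_dens) su_shift_ge0 su_scaleD_shift_ge0.
by rewrite size_spectrum.
Qed.

Lemma vN_entropy_su_channel_delta_mx (i : 'I_n) :
  vN_entropy (su_channel X p (delta_mx i i)) = Smin_formula n p.
Proof.
rewrite vN_entropy_su_channel ?Smin_formula_xlnx; last exact: density_delta_mx.
rewrite (perm_big _ (perm_spectrum_delta_mx i)) big_map big_enum /= (bigD1 i) //=.
rewrite eqxx mulr1 (eq_bigr (fun=> xlnx (su_shift n p))) => [|k /negbTE ->]; last first.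
  by rewrite mulr0 add0r.
rewrite sumr_const cardC1 card_ord -[_ *+ n.-1]mulr_natl.
have nB1 : (n.-1%:R : R) = nr - 1 by rewrite -[in RHS](prednK n_gt0) -natr1 addrK.
by rewrite nB1; ring.
Qed.

Lemma su_channel_min_output_entropy : is_min_output_entropy X p (Smin_formula n p).
Proof.
split; last by move=> rho; apply: Smin_formula_le_vN_entropy.
pose i0 : 'I_n := Ordinal n_gt0.
exists (delta_mx i0 i0).
by split; [exact: density_delta_mx | exact: vN_entropy_su_channel_delta_mx].
Qed.

End SuChannel.

Lemma min_output_entropy_unique {R : realType} n (X : 'I_(n ^ 2 - 1) -> 'M[R[i]]_n) p s t :
  is_min_output_entropy X p s -> is_min_output_entropy X p t -> s = t.
Proof.
move=> [[rho [rho_dens rho_val]] s_min] [[sigma [sigma_dens sigma_val]] t_min].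
apply/le_anti/andP; split.
  by rewrite -sigma_val; apply: s_min.
by rewrite -rho_val; apply: t_min.
Qed.

Section Asymptotics.
Context {R : realType}.

Lemma ln_sqrB1_dist (x : R) : 2 <= x -> `|ln (x ^+ 2 - 1) - 2 * ln x| <= 1.
Proof.
move=> x_ge2; have x2_ge4 : 4 <= x ^+ 2 by rewrite expr2; nra.
have x2B1_gt0 : 0 < x ^+ 2 - 1 by lra.
rewrite mulr_natl -lnXn ?(lt_le_trans _ x_ge2) // ler_norml; apply/andP; split.
  have ln_le : ln (x ^+ 2) - ln (x ^+ 2 - 1) <= (x ^+ 2 - 1)^-1.
    have -> : (x ^+ 2 - 1)^-1 = x ^+ 2 / (x ^+ 2 - 1) - 1 by field; rewrite gt_eqF.
    rewrite -ln_div ?posrE //; last lra.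
    by rewrite -[X in ln X](subrKC 1) le_ln1Dx // ltrBrDr addNr divr_gt0 //; lra.
  have : (x ^+ 2 - 1)^-1 <= 1 by rewrite invf_le1 //; lra.
  lra.
have : ln (x ^+ 2 - 1) <= ln (x ^+ 2) by rewrite ler_ln ?posrE //; lra.
lra.
Qed.

Lemma norm_xlnx_le1 (y : R) : 0 < y -> y <= 1 -> `|y * ln y| <= 1.
Proof.
move=> y_gt0 y_le1; rewrite ler_norml; apply/andP; split; last first.
  by have := ln_le0 y_le1; nra.
have ln_le : - ln y <= y^-1 - 1.
  by rewrite -lnV ?posrE // -[X in ln X](subrKC 1) le_ln1Dx // ltrBrDr addNr invr_gt0.
have := ler_wpM2l (ltW y_gt0) ln_le; rewrite mulrBr mulfV ?gt_eqF //; nra.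
Qed.

Lemma Smin_formula_over_ln_dist (n : nat) (p : R) : (2 <= n)%N -> 0 <= p -> p <= 1 ->
  `|p - Smin_formula n p / ln n%:R| <= n%:R^-1 + (2 + `|ln p|) / ln n%:R.
Proof.
move=> n_ge2 p_ge0 p_le1; set x : R := n%:R.
have x_ge2 : 2 <= x by rewrite /x (ler_nat R 2 n).
have lnx_gt0 : 0 < ln x by apply: ln_gt0; lra.
set q := x * p / (x + 1).
have q_ge0 : 0 <= q by rewrite divr_ge0 ?mulr_ge0 //; lra.
have q_lt1 : q < 1 by rewrite ltr_pdivrMr; nra.
set d := ln (x ^+ 2 - 1) - 2 * ln x; set c := (1 - q) * ln (1 - q).
have SminE : Smin_formula n p = q * ln x + (q * (d - ln p) - c).
  rewrite /Smin_formula -/x -/q -/c; have [p0|p_neq0] := eqVneq p 0.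
    by rewrite /q p0 !(mulr0, mul0r, oppr0, add0r).
  have p_gt0 : 0 < p by rewrite lt_def p_neq0.
  have x2B1_gt0 : 0 < x ^+ 2 - 1 by rewrite expr2; nra.
  rewrite ln_div ?lnM ?posrE ?mulr_gt0 //; try lra.
  by rewrite /d; ring.
have q_dist : `|p - q| <= x^-1.
  have -> : p - q = p / (x + 1) by rewrite /q; field; rewrite gt_eqF //; lra.
  rewrite ger0_norm ?divr_ge0 //; last lra.
  have : 0 < x^-1 by rewrite invr_gt0; lra.
  rewrite ler_pdivrMr ?mulrDr ?mulVf ?gt_eqF //; lra.
have rest_bound : `|q * (d - ln p) - c| <= 2 + `|ln p|.
  have c_bound := norm_xlnx_le1 (1 - q) (ltac:(lra) : 0 < 1 - q) (ltac:(lra) : 1 - q <= 1).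
  have dp_bound : `|d - ln p| <= 1 + `|ln p|.
    by rewrite (le_trans (ler_normB _ _)) // lerD2r ln_sqrB1_dist.
  have qdp_bound : `|q| * `|d - ln p| <= 1 + `|ln p|.
    by rewrite -[X in _ <= X]mul1r ler_pM // ger0_norm //; lra.
  by rewrite (le_trans (ler_normB _ _)) // normrM; lra.
have -> : p - Smin_formula n p / ln x = (p - q) - (q * (d - ln p) - c) / ln x.
  by rewrite SminE; field; rewrite gt_eqF.
rewrite (le_trans (ler_normB _ _)) // lerD // normf_div (gtr0_norm lnx_gt0).
by rewrite ler_pM2r ?invr_gt0.
Qed.

Lemma Smin_formula_over_ln_cvg (p : R) : 0 <= p -> p <= 1 ->
  (fun n : nat => Smin_formula n p / ln (n%:R : R)) @ \oo --> p.
Proof.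
move=> p_ge0 p_le1; set K := 2 + `|ln p|.
have K_ge0 : 0 <= K by rewrite addr_ge0.
apply/cvgrPdist_lt => e e_gt0; near=> n.
have n_ge2 : (2 <= n)%N by near: n; exists 2%N.
have n_gt : 2 / e < n%:R by near: n; exact: nbhs_infty_gtr.
have n_gt' : expR (2 * K / e) < n%:R by near: n; exact: nbhs_infty_gtr.
have two_e_gt0 : 0 < 2 / e by rewrite divr_gt0.
have twoK_e_ge0 : 0 <= 2 * K / e by rewrite divr_ge0 ?mulr_ge0 // ltW.
have ln_gt : 2 * K / e < ln n%:R.
  by rewrite -[X in X < _]expRK ltr_ln ?posrE ?expR_gt0 //; lra.
have inv_lt : n%:R^-1 < e / 2.
  by rewrite -[e / 2]invrK invf_div ltf_pV2 ?posrE //; lra.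
have K_ln_lt : K / ln n%:R < e / 2.
  have eKe : e * (2 * K / e) = 2 * K by field; rewrite gt_eqF.
  rewrite ltr_pdivrMr; nra.
apply: le_lt_trans (Smin_formula_over_ln_dist n p n_ge2 p_ge0 p_le1) _; rewrite -/K; lra.
Unshelve. all: by end_near.
Qed.

End Asymptotics.

Theorem mainTheorem3 (R : realType) (p : R) (hp0 : 0 <= p) (hp1 : p <= 1) :
  (forall (n : nat) (X : 'I_(n ^ 2 - 1) -> 'M[R[i]]_n),
      (2 <= n)%N -> gell_mann_basis X ->
      is_min_output_entropy X p (@Smin_formula R n p)) /\
  (forall (X : forall n : nat, 'I_(n ^ 2 - 1) -> 'M[R[i]]_n) (s : nat -> R),
      (forall n : nat, (2 <= n)%N -> gell_mann_basis (X n)) ->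
      (forall n : nat, (2 <= n)%N -> is_min_output_entropy (X n) p (s n)) ->
      (fun n : nat => s n / ln (n%:R : R)) @ \oo --> p).
Proof.
have Smin_min n (X : 'I_(n ^ 2 - 1) -> 'M[R[i]]_n) :
    (2 <= n)%N -> gell_mann_basis X -> is_min_output_entropy X p (Smin_formula n p).
  by move=> n_ge2 gmX; apply: su_channel_min_output_entropy.
split=> // X s gmX s_min.
apply: cvg_trans (Smin_formula_over_ln_cvg p hp0 hp1); apply: near_eq_cvg.
near=> n; have n_ge2 : (2 <= n)%N by near: n; exists 2%N.
congr (_ / _); apply: min_output_entropy_unique.
- exact: Smin_min (gmX n n_ge2).
- exact: s_min.
Unshelve. all: by end_near.
Qed.
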